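(* Let $\sigma\subseteq N_\mathbb{Q}$ be a strongly convex rational polyhedral cone, $\tau$ a $k$-dimensional regular face of $\sigma$ with primitive ray generators $p_1,\ldots,p_k$, and let $c_1,\ldots,c_k\in\tau^\perp\cap M$ be arbitrary. Then there is a set of Demazure roots $\{e_1^{(r)},e_2^{(r)}\mid r=1,\ldots,k\}$ of $\sigma$ compatible with $\tau$ such that $e_1^{(r)}-e_2^{(r)}=c_r$ for all $r=1,\ldots,k$.
   Context: $N$ is a lattice, $M$ its dual, $\langle\cdot,\cdot\rangle$ the pairing. A face is regular if its primitive ray generators are part of a basis of $N$. If $p_1,\ldots,p_m$ are the primitive vectors on the rays of $\sigma$, a Demazure root associated with $p_i$ is an $e\in M$ with $\langle p_i,e\rangle=-1$ and $\langle p_j,e\rangle\ge0$ for all $j\ne i$. A set $\{e_1^{(r)},e_2^{(r)}\}_{r=1}^k$ of Demazure roots of $\sigma$ is compatible with $\tau$ if $\langle p_s,e_1^{(r)}\rangle=\langle p_s,e_2^{(r)}\rangle=-\delta_{rs}$ for all $r,s=1,\ldots,k$. *)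

From HB Require Import structures.
From mathcomp Require Import all_boot all_order all_algebra.
Set Implicit Arguments. Unset Strict Implicit. Unset Printing Implicit Defensive.
Import Order.TTheory GRing.Theory Num.Theory.
Local Open Scope ring_scope.

(* N = Z^n (row vectors 'rV[int]_n), M = its dual, also identified with
   'rV[int]_n via the standard pairing. N_Q = Q^n. *)

Definition pair (n : nat) (v u : 'rV[int]_n) : int := \sum_(i < n) v 0 i * u 0 i.

Definition toQ (n : nat) (v : 'rV[int]_n) : 'rV[rat]_n := map_mx intr v.

Definition primitive (n : nat) (v : 'rV[int]_n) : Prop :=
  v != 0 /\ forall (d : int) (w : 'rV[int]_n), v = d *: w -> d = 1 \/ d = -1.

(* p_1,...,p_m are exactly the primitive ray generators of the strongly convex
   rational polyhedral cone sigma = cone_Q(p_1,...,p_m) :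
   - each p_i is primitive, the p_i are pairwise distinct,
   - no p_i lies in the (rational) cone generated by the others (each spans
     an extremal ray),
   - strong convexity: sigma ∩ (-sigma) = {0}, i.e. a nonnegative rational
     combination of the p_i vanishes only trivially. *)
Definition ray_generators (n m : nat) (p : 'I_m -> 'rV[int]_n) : Prop :=
  [/\ forall i, primitive (p i),
      injective p,
      (forall i (l : 'I_m -> rat), (forall j, 0 <= l j) ->
          toQ (p i) <> \sum_(j < m | j != i) l j *: toQ (p j))
    & (forall l : 'I_m -> rat, (forall j, 0 <= l j) ->
          \sum_(j < m) l j *: toQ (p j) = 0 -> forall j, l j = 0)].

(* t : 'I_k -> 'I_m lists the rays of a face tau of sigma:
   tau = sigma ∩ u^perp for some u in sigma^vee ∩ M, and the rays of sigma
   lying in tau are exactly p_(t 1), ..., p_(t k). *)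
Definition is_face (n m k : nat) (p : 'I_m -> 'rV[int]_n) (t : 'I_k -> 'I_m) : Prop :=
  injective t /\
  exists u : 'rV[int]_n,
    (forall j, 0 <= pair (p j) u) /\
    (forall j, pair (p j) u = 0 <-> exists r, t r = j).

(* The face is regular: its primitive ray generators are part of a basis of N
   (a basis of N = rows of an integer matrix invertible over Z). *)
Definition regular_face (n m k : nat) (p : 'I_m -> 'rV[int]_n) (t : 'I_k -> 'I_m) : Prop :=
  exists (B : 'M[int]_n) (f : 'I_k -> 'I_n),
    B \in unitmx /\ injective f /\ forall r, row (f r) B = p (t r).

Definition demazure_root_at (n m : nat) (p : 'I_m -> 'rV[int]_n) (i : 'I_m)
    (e : 'rV[int]_n) : Prop :=
  pair (p i) e = -1 /\ forall j, j != i -> 0 <= pair (p j) e.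

Definition demazure_root (n m : nat) (p : 'I_m -> 'rV[int]_n) (e : 'rV[int]_n) : Prop :=
  exists i, demazure_root_at p i e.

Definition compatible (n m k : nat) (p : 'I_m -> 'rV[int]_n) (t : 'I_k -> 'I_m)
    (e1 e2 : 'I_k -> 'rV[int]_n) : Prop :=
  forall r s : 'I_k,
    pair (p (t s)) (e1 r) = - ((r == s)%:R) /\ pair (p (t s)) (e2 r) = - ((r == s)%:R).

From HB Require Import structures.
From mathcomp Require Import all_boot all_order all_algebra.
From mathcomp Require Import zify.
Set Implicit Arguments.
Unset Strict Implicit.
Unset Printing Implicit Defensive.

Import Order.TTheory GRing.Theory Num.Theory.
Local Open Scope ring_scope.

(* Since tau is regular, the columns of the inverse of a basis matrix containing
   p_(t 1), ..., p_(t k) give d_r in M with <p_(t s), d_r> = delta_rs.  The face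
   tau is cut out by some u in the dual cone, so <p_j, u> >= 1 off tau.  Then
   e_1^(r) = -d_r + N u and e_2^(r) = -d_r - c_r + N u are Demazure roots at
   p_(t r) for N large: on tau the shift by u and by c_r is invisible, and off
   tau the term N <p_j, u> dominates. *)

Lemma pairDr n (v a b : 'rV[int]_n) : pair v (a + b) = pair v a + pair v b.
Proof. by rewrite /pair -big_split; apply: eq_bigr => i _; rewrite mxE mulrDr. Qed.

Lemma pairNr n (v a : 'rV[int]_n) : pair v (- a) = - pair v a.
Proof. by rewrite /pair -sumrN; apply: eq_bigr => i _; rewrite mxE mulrN. Qed.

Lemma pairBr n (v a b : 'rV[int]_n) : pair v (a - b) = pair v a - pair v b.
Proof. by rewrite pairDr pairNr. Qed.

Lemma pairZr n (v a : 'rV[int]_n) x : pair v (x *: a) = x * pair v a.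
Proof. by rewrite /pair mulr_sumr; apply: eq_bigr => i _; rewrite mxE mulrCA. Qed.

Lemma pair_row_col n (A C : 'M[int]_n) i j :
  pair (row i A) (col j C)^T = (A *m C) i j.
Proof. by rewrite mxE; apply: eq_bigr => l _; rewrite !mxE. Qed.

Lemma regular_face_dual_basis n m k (p : 'I_m -> 'rV[int]_n) (t : 'I_k -> 'I_m) :
  regular_face p t ->
  exists d : 'I_k -> 'rV[int]_n, forall r s, pair (p (t s)) (d r) = (s == r)%:R.
Proof.
move=> [B [f [B_unit [f_inj rowB]]]].
exists (fun r => (col (f r) (invmx B))^T) => r s.
by rewrite -rowB pair_row_col mulmxV // mxE (inj_eq f_inj).
Qed.

Lemma pair_shift_ge0 n (v u w : 'rV[int]_n) (N : int) :
  0 < pair v u -> `|pair v w| <= N -> 0 <= pair v (w + N *: u).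
Proof.
move=> vu_gt0 wN; rewrite pairDr pairZr.
have N_ge0 : 0 <= N := le_trans (normr_ge0 _) wN.
have : N <= N * pair v u by rewrite ler_peMr // -gtz0_ge1.
have := ler_norm (- pair v w); rewrite normrN.
lia.
Qed.

Section FaceShift.

Variables (n m k : nat) (p : 'I_m -> 'rV[int]_n) (t : 'I_k -> 'I_m)
  (u : 'rV[int]_n).
Hypothesis u_dual : forall j, 0 <= pair (p j) u.
Hypothesis u_face : forall j, pair (p j) u = 0 <-> exists r, t r = j.

Lemma pair_face_shift s w N : pair (p (t s)) (w + N *: u) = pair (p (t s)) w.
Proof.
have u_perp : pair (p (t s)) u = 0 by apply/u_face; exists s.
by rewrite pairDr pairZr u_perp mulr0 addr0.
Qed.

Lemma demazure_root_at_face_shift r w N :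
  (forall s, pair (p (t s)) w = - (s == r)%:R) ->
  (forall j, `|pair (p j) w| <= N) ->
  demazure_root_at p (t r) (w + N *: u).
Proof.
move=> w_face wN; split; first by rewrite pair_face_shift w_face eqxx.
move=> j; have [/u_face [s <-]|u_neq0] := eqVneq (pair (p j) u) 0 => j_neq.
  rewrite pair_face_shift w_face oppr_ge0 lern0.
  by rewrite eqb0; apply: contraNneq j_neq => ->.
by apply: pair_shift_ge0 => //; rewrite lt_def u_neq0 u_dual.
Qed.

End FaceShift.

Lemma ler_norm_sum_term m (a : 'I_m -> int) j : `|a j| <= \sum_i `|a i|.
Proof. by rewrite (bigD1 j) //= lerDl sumr_ge0. Qed.

Theorem mainTheorem4 (n m k : nat) (p : 'I_m -> 'rV[int]_n) (t : 'I_k -> 'I_m)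
  (Hsigma : ray_generators p) (Hface : is_face p t) (Hreg : regular_face p t)
  (c : 'I_k -> 'rV[int]_n) (Hc : forall r s : 'I_k, pair (p (t s)) (c r) = 0) :
  exists e1 e2 : 'I_k -> 'rV[int]_n,
    [/\ forall r, demazure_root p (e1 r) /\ demazure_root p (e2 r),
        compatible p t e1 e2
      & forall r, e1 r - e2 r = c r].
Proof.
move: Hface => [_ [u [u_dual u_face]]].
have [d d_dual] := regular_face_dual_basis Hreg.
pose N r := \sum_j `|pair (p j) (d r)| + \sum_j `|pair (p j) (c r)|.
have bound1 r j : `|pair (p j) (- d r)| <= N r.
  by rewrite pairNr normrN ler_wpDr ?sumr_ge0 ?ler_norm_sum_term.
have bound2 r j : `|pair (p j) (- d r - c r)| <= N r.
  rewrite pairBr pairNr (le_trans (ler_normB _ _)) // normrN.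
  by rewrite lerD ?ler_norm_sum_term.
have face1 r s : pair (p (t s)) (- d r) = - (s == r)%:R by rewrite pairNr d_dual.
have face2 r s : pair (p (t s)) (- d r - c r) = - (s == r)%:R.
  by rewrite pairBr face1 Hc subr0.
exists (fun r => - d r + N r *: u), (fun r => (- d r - c r) + N r *: u); split.
- by move=> r; split; exists (t r); apply: demazure_root_at_face_shift.
- by move=> r s; rewrite !(pair_face_shift u_face) face1 face2 eq_sym.
- by move=> r; rewrite opprD addrACA subrr addr0 opprB addrC subrK.
Qed.
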